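(* Let $n$ be a natural number and $s$ a negative integer with $n+s>0$, and put $m=\frac{(-s)(n-1)}{n+s}$. Suppose there exists a divisible design graph $\Delta$ with parameters $(V,K,\lambda_1,\lambda_2;m,n)$, where $V=\frac{n(-s)(n-1)}{n+s}$, $K=(-s)(n-1)$, $\lambda_1=(-s)(n+s-1)$, $\lambda_2=\frac{(-s)(n-1)(n+s)}{n}$, with canonical classes $P_1,\dots,P_m$. Let $\mathcal{D}=(\mathcal{P},\mathcal{B})$ be a symmetric $2$-design with parameters $(m,-s,\frac{(-s)(n+s)}{n})$, with $\mathcal{P}$ disjoint from the vertex set of $\Delta$, and let $\phi$ be any bijection from $\{P_1,\dots,P_m\}$ to $\mathcal{B}$. Define the graph $\Gamma$ with vertex set $V(\Delta)\cup\mathcal{P}$ in which: two vertices of $\Delta$ are adjacent iff they are adjacent in $\Delta$; no two points of $\mathcal{P}$ are adjacent; a vertex $x\in P_i$ is adjacent to $y\in\mathcal{P}$ iff $y\in\phi(P_i)$. Then $\Gamma$ is a strongly regular graph with parameters $v=m(n+1)$, $k=(-s)n$, $\lambda=\mu=(-s)(n+s)$.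
   Context: A $K$-regular graph on $V$ vertices, neither complete nor edgeless, is a divisible design graph with parameters $(V,K,\lambda_1,\lambda_2;m,n)$ if its vertex set can be partitioned into $m$ classes (canonical classes) of size $n$ such that any two distinct vertices in the same class have exactly $\lambda_1$ common neighbours and any two vertices in different classes have exactly $\lambda_2$ common neighbours. A symmetric $2$-design with parameters $(m,\kappa,\ell)$ is a pair $(\mathcal{P},\mathcal{B})$ where $\mathcal{P}$ is a set of $m$ points and $\mathcal{B}$ a set of $m$ subsets (blocks) of $\mathcal{P}$, each of size $\kappa$, such that every two distinct points lie in exactly $\ell$ common blocks (equivalently, any two distinct blocks meet in exactly $\ell$ points). A strongly regular graph with parameters $(v,k,\lambda,\mu)$ is a $k$-regular graph on $v$ vertices in which adjacent vertices have $\lambda$ and distinct non-adjacent vertices have $\mu$ common neighbours. *)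

From mathcomp Require Import all_boot all_order all_algebra.
Set Implicit Arguments. Unset Strict Implicit. Unset Printing Implicit Defensive.
Import Order.TTheory GRing.Theory Num.Theory.
Local Open Scope ring_scope.

Definition is_graph (T : finType) (e : rel T) : Prop :=
  symmetric e /\ irreflexive e.

Definition nbhd (T : finType) (e : rel T) (x : T) : {set T} := [set y | e x y].

Definition common (T : finType) (e : rel T) (x y : T) : nat :=
  #|[set z | e x z && e y z]|.

Definition complete_graph (T : finType) (e : rel T) : Prop :=
  forall x y : T, x != y -> e x y.

Definition edgeless_graph (T : finType) (e : rel T) : Prop :=
  forall x y : T, ~~ e x y.

(* Divisible design graph with parameters (V,K,l1,l2;m,n), the canonical
   classes being the fibres P_i = cls^-1(i), i : 'I_m.  Numerical parameters
   are rationals (the paper defines them by fractions). *)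
Definition is_ddg (T : finType) (e : rel T) (m : nat) (cls : T -> 'I_m)
    (V K l1 l2 n : rat) : Prop :=
  is_graph e /\ #|T|%:R = V /\
  (forall x : T, #|nbhd e x|%:R = K) /\
  ~ complete_graph e /\ ~ edgeless_graph e /\
  (forall i : 'I_m, #|[set x | cls x == i]|%:R = n) /\
  (forall x y : T, x != y -> cls x = cls y -> (common e x y)%:R = l1) /\
  (forall x y : T, cls x != cls y -> (common e x y)%:R = l2).

Definition is_sym_design (Pt : finType) (B : {set {set Pt}})
    (m kappa ell : rat) : Prop :=
  [/\ #|Pt|%:R = m, #|B|%:R = m,
      forall b, b \in B -> #|b|%:R = kappa
    & forall p q : Pt, p != q ->
        #|[set b in B | (p \in b) && (q \in b)]|%:R = ell].

Definition is_srg (T : finType) (e : rel T) (v k lam mu : rat) : Prop :=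
  [/\ is_graph e, #|T|%:R = v,
      forall x : T, #|nbhd e x|%:R = k,
      forall x y : T, x != y -> e x y -> (common e x y)%:R = lam
    & forall x y : T, x != y -> ~~ e x y -> (common e x y)%:R = mu].

Definition gamma_rel (T Pt : finType) (e : rel T) (m : nat) (cls : T -> 'I_m)
    (phi : 'I_m -> {set Pt}) : rel (T + Pt) :=
  fun u v =>
    match u, v with
    | inl x, inl y => e x y
    | inr _, inr _ => false
    | inl x, inr p => p \in phi (cls x)
    | inr p, inl x => p \in phi (cls x)
    end.

(* Every regularity statement of the proof is obtained by double counting with
   rational indicator sums, and every "this count is constant" statement by one
   variance argument: rationals f_1, ..., f_n with sum n c and sum of squares
   n c^2 are all equal to c (constant_of_moments).

   - for a symmetric design, given as m blocks phi i indexed by 'I_m: every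
     point lies in k blocks and any two blocks meet in l points (the dual
     design is again a 2-(m,k,l) design);
   - for the divisible design graph: when K = m c and K + (n-1) l1 = m c^2,
     every vertex has exactly c neighbours in every canonical class;
   - for the extended graph Gamma on V(Delta) + P: its degrees and numbers of
     common neighbours in terms of the local parameters of Delta and of the
     design (section ExtendedGraph).

   With c = n + s, k = -s and l = -s(n+s)/n these counts are all equal to
   -s n (degrees) and -s (n+s) (common neighbours), which is the theorem. *)

From mathcomp Require Import all_boot all_order all_algebra.
From mathcomp Require Import ring.
Set Implicit Arguments. Unset Strict Implicit. Unset Printing Implicit Defensive.
Import Order.TTheory GRing.Theory Num.Theory.
Local Open Scope ring_scope.

Notation ind b := ((nat_of_bool b)%:R : rat).

Lemma ind_and (a b : bool) : ind (a && b) = ind a * ind b.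
Proof. by case: a; case: b; rewrite ?mul1r ?mul0r. Qed.

Lemma ind_sq (b : bool) : ind b * ind b = ind b.
Proof. by rewrite -ind_and andbb. Qed.

Lemma card_setE (T : finType) (A : {set T}) : #|A|%:R = \sum_x ind (x \in A).
Proof.
rewrite -sum1_card natr_sum big_mkcond /=.
by apply: eq_bigr => x _; case: (x \in A).
Qed.

Lemma card_set_predE (T : finType) (P : pred T) :
  #|[set x | P x]|%:R = \sum_x ind (P x).
Proof. by rewrite card_setE; apply: eq_bigr => x _; rewrite inE. Qed.

Lemma sum_ind_eq (I : finType) (a : I) (G : I -> rat) :
  \sum_j ind (a == j) * G j = G a.
Proof.
rewrite (bigD1 a) //= eqxx mul1r big1 ?addr0 // => j /negbTE.
by rewrite eq_sym => ->; rewrite mul0r.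
Qed.

Lemma common_sym (T : finType) (e : rel T) (x y : T) : common e x y = common e y x.
Proof. by apply: eq_card => z; rewrite !inE andbC. Qed.

(* The variance argument: if the values f i (i in P) have mean c and mean
   square c^2, then the sum of the (f i - c)^2 vanishes, so all f i equal c. *)
Lemma constant_of_moments (R : realDomainType) (I : finType) (P : pred I)
    (f : I -> R) (c : R) :
  \sum_(i | P i) f i = #|P|%:R * c ->
  \sum_(i | P i) f i ^+ 2 = #|P|%:R * c ^+ 2 ->
  forall i, P i -> f i = c.
Proof.
move=> sum1 sum2.
have var0 : \sum_(i | P i) (f i - c) ^+ 2 = 0.
  have cardP : \sum_(i | P i) (1 : R) = #|P|%:R by rewrite sumr_const.
  rewrite (eq_bigr (fun i => f i ^+ 2 + (- (2 * c)) * f i + c ^+ 2 * 1)).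
    by rewrite !big_split /= -!mulr_sumr sum1 sum2 cardP; ring.
  by move=> i _; ring.
move=> i Pi; have := psumr_eq0P (fun j _ => sqr_ge0 (f j - c)) var0 Pi.
by move/eqP; rewrite sqrf_eq0 subr_eq0 => /eqP.
Qed.

(* The identity
   (m - 1) l = k (k - 1) is the usual relation between the parameters; the
   hypothesis [nondegenerate] excludes singleton blocks on several points,
   for which the number of blocks through a point is not determined. *)
Section SymmetricDesign.

Variables (Pt : finType) (m : nat) (phi : 'I_m -> {set Pt}) (k l : rat).
Hypothesis card_points : #|Pt|%:R = m%:R :> rat.
Hypothesis block_size : forall i, #|phi i|%:R = k.
Hypothesis pair_count :
  forall p q, p != q -> #|[set i | (p \in phi i) && (q \in phi i)]|%:R = l.
Hypothesis fisher : (m%:R - 1) * l = k * (k - 1).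
Hypothesis nondegenerate : k = 1 -> m = 1%N.

Let a p i := ind (p \in phi i).

Let block_sum i : \sum_p a p i = k.
Proof. by rewrite -(block_size i) card_setE. Qed.

Let pair_sum p q : p != q -> \sum_i a p i * a q i = l.
Proof.
move=> npq; rewrite -(pair_count npq) card_set_predE.
by apply: eq_bigr => i _; rewrite ind_and.
Qed.

Let other_points (p : Pt) : \sum_(q | q != p) (1 : rat) = m%:R - 1.
Proof.
have : \sum_(q : Pt) (1 : rat) = m%:R by rewrite sumr_const card_points.
by rewrite (bigD1 p) //= => <-; ring.
Qed.

(* Counting the pairs (q, i) with p, q in phi i in two ways: r (k - 1) is
   (m - 1) l, where r is the number of blocks through p. *)
Let replication_identity p : (\sum_i a p i) * (k - 1) = (m%:R - 1) * l.
Proof.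
have by_blocks : \sum_q \sum_i a p i * a q i = (\sum_i a p i) * k.
  rewrite exchange_big mulr_suml; apply: eq_bigr => i _.
  by rewrite -mulr_sumr block_sum.
have by_points : \sum_q \sum_i a p i * a q i = \sum_i a p i + (m%:R - 1) * l.
  rewrite (bigD1 p) //=; congr (_ + _); first by apply: eq_bigr => i _; rewrite ind_sq.
  rewrite -(other_points p) mulr_suml; apply: eq_bigr => q nqp.
  by rewrite mul1r pair_sum // eq_sym.
by rewrite mulrBr mulr1 -by_blocks by_points addrAC subrr add0r.
Qed.

Lemma design_replication p : #|[set i | p \in phi i]|%:R = k.
Proof.
rewrite card_set_predE -/(a p _).
have [k1|k_neq1] := eqVneq k 1; last first.
  apply: (mulIf (_ : k - 1 != 0)); first by rewrite subr_eq0.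
  by rewrite replication_identity fisher.
have m1 := nondegenerate k1.
have only_p q : q = p.
  have : (#|Pt| <= 1)%N by move/eqP: card_points; rewrite m1 eqr_nat => /eqP ->.
  by move/fintype_le1P => /(_ p).
have incidences : \sum_q \sum_i a q i = m%:R * k.
  rewrite exchange_big (eq_bigr _ (fun i _ => block_sum i)).
  by rewrite sumr_const card_ord mulr_natl.
rewrite (bigD1 p) //= [X in _ + X]big1 ?addr0 in incidences.
  by rewrite incidences m1 mul1r.
by move=> q; rewrite (only_p q) eqxx.
Qed.

Let cooccurrence p q : \sum_j a p j * a q j = if p == q then k else l.
Proof.
case: eqVneq => [<-|npq]; last exact: pair_sum.
rewrite -(design_replication p) card_set_predE.
by apply: eq_bigr => j _; rewrite ind_sq.
Qed.

Let meet i j := \sum_p a p i * a p j.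

Let meet_self i : meet i i = k.
Proof. by rewrite -(block_sum i); apply: eq_bigr => p _; rewrite ind_sq. Qed.

Let meet_sum i : \sum_j meet i j = k * k.
Proof.
rewrite exchange_big -{1}(block_sum i) mulr_suml; apply: eq_bigr => p _.
by rewrite -mulr_sumr -(design_replication p) card_set_predE mulrC.
Qed.

Let meet_sq_sum i : \sum_j meet i j ^+ 2 = k * (k + (k - 1) * l).
Proof.
transitivity (\sum_p \sum_q a p i * a q i * (\sum_j a p j * a q j)).
  under eq_bigr do rewrite expr2 mulr_suml.
  rewrite exchange_big; apply: eq_bigr => p _; under eq_bigr do rewrite mulr_sumr.
  rewrite exchange_big; apply: eq_bigr => q _; rewrite mulr_sumr.
  by apply: eq_bigr => j _; ring.
rewrite -{1}(block_sum i) mulr_suml; apply: eq_bigr => p _.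
rewrite (bigD1 p) //= cooccurrence eqxx ind_sq.
under eq_bigr => q nqp do rewrite cooccurrence eq_sym (negbTE nqp) mulrAC.
have others : \sum_(q | q != p) a q i = k - a p i.
  by rewrite -(block_sum i) [in RHS](bigD1 p) //= addrAC subrr add0r.
by rewrite -mulr_sumr others /a; case: (p \in phi i); rewrite /= ?mulr1n; ring.
Qed.

(* Any two distinct blocks meet in exactly l points: over the m - 1 blocks
   j != i, the meets have mean l and mean square l^2. *)
Lemma design_intersection i j : i != j -> #|phi i :&: phi j|%:R = l.
Proof.
have meetE t : #|phi i :&: phi t|%:R = meet i t.
  by rewrite card_setE; apply: eq_bigr => p _; rewrite inE ind_and.
have other_blocks : #|(fun t => t != i)|%:R = m%:R - 1 :> rat.
  have : \sum_(t : 'I_m) (1 : rat) = m%:R by rewrite sumr_const card_ord.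
  by rewrite (bigD1 i) //= sumr_const => <-; ring.
have meet_sum_others : \sum_(t | t != i) meet i t = k * k - k.
  by rewrite -(meet_sum i) [in RHS](bigD1 i) //= meet_self addrAC subrr add0r.
have meet_sq_sum_others :
    \sum_(t | t != i) meet i t ^+ 2 = k * (k + (k - 1) * l) - k ^+ 2.
  by rewrite -(meet_sq_sum i) [in RHS](bigD1 i) //= meet_self addrAC subrr add0r.
move=> nij; rewrite meetE; apply: (@constant_of_moments _ _ (fun t => t != i)).
- by rewrite meet_sum_others other_blocks fisher; ring.
- by rewrite meet_sq_sum_others other_blocks expr2 mulrA fisher; ring.
- by rewrite eq_sym.
Qed.

End SymmetricDesign.

Lemma card_indexed_blocks (I Pt : finType) (phi : I -> {set Pt})
    (P : pred {set Pt}) :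
  injective phi -> #|[set b in phi @: setT | P b]| = #|[set i | P (phi i)]|.
Proof.
move=> phi_inj; rewrite -[RHS](card_imset _ phi_inj).
apply: eq_card => b; rewrite !inE; apply/andP/imsetP.
  by case=> /imsetP [i _ ->] Pb; exists i; rewrite ?inE.
by case=> i; rewrite inE => Pi ->; split; first exact: imset_f.
Qed.

Section DivisibleDesignGraph.

Variables (T : finType) (e : rel T) (m : nat) (cls : T -> 'I_m) (N K l1 c : rat).
Hypothesis e_sym : symmetric e.
Hypothesis degree : forall x, #|nbhd e x|%:R = K.
Hypothesis class_size : forall i, #|[set x | cls x == i]|%:R = N.
Hypothesis common_in_class :
  forall x y, x != y -> cls x = cls y -> (common e x y)%:R = l1.

Lemma sum_over_classes (F : 'I_m -> rat) : \sum_x F (cls x) = \sum_i F i * N.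
Proof.
under eq_bigr do rewrite -sum_ind_eq.
rewrite exchange_big; apply: eq_bigr => i _.
rewrite -(class_size i) card_set_predE mulr_sumr.
by apply: eq_bigr => x _; rewrite mulrC.
Qed.

Let d x j := \sum_y ind (e x y) * ind (cls y == j).

Let class_degree_sum x : \sum_j d x j = K.
Proof.
rewrite exchange_big -(degree x) card_set_predE; apply: eq_bigr => y _.
by rewrite -mulr_sumr (eq_bigr _ (fun j _ => esym (mulr1 _))) sum_ind_eq mulr1.
Qed.

Let class_pair_sum x :
  \sum_j d x j ^+ 2 = \sum_y \sum_y' ind (e x y) * ind (e x y') * ind (cls y' == cls y).
Proof.
transitivity (\sum_j \sum_y \sum_y'
    ind (e x y) * ind (e x y') * (ind (cls y == j) * ind (cls y' == j))).
  apply: eq_bigr => j _; rewrite expr2 mulr_suml; apply: eq_bigr => y _.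
  by rewrite mulr_sumr; apply: eq_bigr => y' _; ring.
rewrite exchange_big; apply: eq_bigr => y _; rewrite exchange_big.
by apply: eq_bigr => y' _; rewrite -mulr_sumr sum_ind_eq.
Qed.

(* Summed over x, these pairs are counted through their common neighbours:
   K for y = y', and l1 for each of the N - 1 other vertices y' of the class. *)
Let class_degree_sq : \sum_x \sum_j d x j ^+ 2 = #|T|%:R * (K + (N - 1) * l1).
Proof.
transitivity (\sum_y \sum_y' ind (cls y' == cls y) * (common e y y')%:R).
  rewrite (eq_bigr _ (fun x _ => class_pair_sum x)) exchange_big.
  apply: eq_bigr => y _; rewrite exchange_big; apply: eq_bigr => y' _.
  rewrite /common card_set_predE mulr_sumr; apply: eq_bigr => x _.
  by rewrite ind_and (e_sym x y) (e_sym x y'); ring.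
rewrite mulr_natl -sumr_const; apply: eq_bigr => y _.
rewrite (bigD1 y) //= eqxx mul1r; congr (_ + _).
  rewrite -(degree y) /common /nbhd; congr _%:R.
  by apply: eq_card => z; rewrite !inE andbb.
have same_class : \sum_(y' | y' != y) ind (cls y' == cls y) = N - 1.
  rewrite -(class_size (cls y)) card_set_predE [in RHS](bigD1 y) //=.
  by rewrite eqxx addrAC subrr add0r.
rewrite -same_class mulr_suml; apply: eq_bigr => y' ny'.
have [same|] := eqVneq (cls y') (cls y); last by rewrite !mul0r.
by rewrite common_in_class // eq_sym.
Qed.

(* When K = m c and K + (N - 1) l1 = m c^2, the numbers d x j have mean c
   and mean square c^2, hence every vertex has c neighbours in each class. *)
Lemma ddg_class_degree : K = m%:R * c -> K + (N - 1) * l1 = m%:R * c ^+ 2 ->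
  forall x j, #|[set y | e x y && (cls y == j)]|%:R = c.
Proof.
move=> K_eq sq_eq x j.
have -> : #|[set y | e x y && (cls y == j)]|%:R = d x j.
  by rewrite card_set_predE; apply: eq_bigr => y _; rewrite ind_and.
have card_pairs : #|(fun _ : T * 'I_m => true)|%:R = #|T|%:R * m%:R :> rat.
  by rewrite card_prod card_ord natrM.
apply: (@constant_of_moments _ _ (fun _ => true) (fun p => d p.1 p.2) c _ _ (x, j)) => //.
- rewrite -pair_bigA /= (eq_bigr _ (fun x _ => class_degree_sum x)) sumr_const.
  by rewrite card_pairs K_eq -[LHS]mulr_natl mulrA.
- rewrite -(pair_bigA _ (fun x j => d x j ^+ 2)) /= class_degree_sq.
  by rewrite card_pairs sq_eq mulrA.
Qed.

End DivisibleDesignGraph.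

Section ExtendedGraph.

Variables (T Pt : finType) (e : rel T) (m : nat) (cls : T -> 'I_m).
Variables (phi : 'I_m -> {set Pt}) (N K l1 l2 k l c : rat).
Hypothesis degree : forall x, #|nbhd e x|%:R = K.
Hypothesis class_size : forall i, #|[set x | cls x == i]|%:R = N.
Hypothesis common_in_class :
  forall x y, x != y -> cls x = cls y -> (common e x y)%:R = l1.
Hypothesis common_across :
  forall x y, cls x != cls y -> (common e x y)%:R = l2.
Hypothesis class_degree :
  forall x j, #|[set y | e x y && (cls y == j)]|%:R = c.
Hypothesis block_size : forall i, #|phi i|%:R = k.
Hypothesis replication : forall p, #|[set i | p \in phi i]|%:R = k.
Hypothesis pair_count :
  forall p q, p != q -> #|[set i | (p \in phi i) && (q \in phi i)]|%:R = l.
Hypothesis intersection : forall i j, i != j -> #|phi i :&: phi j|%:R = l.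

Let g := gamma_rel e cls phi.

Lemma gamma_is_graph : is_graph e -> is_graph g.
Proof.
case=> e_sym e_irr; split; first by move=> [x|p] [y|q] //=; apply: e_sym.
by move=> [x|p] //=; apply: e_irr.
Qed.

Let degree_split u :
  #|nbhd g u|%:R = \sum_x ind (g u (inl x)) + \sum_p ind (g u (inr p)).
Proof. by rewrite card_set_predE big_sumType. Qed.

Let common_split u v : (common g u v)%:R =
  \sum_x ind (g u (inl x)) * ind (g v (inl x)) +
  \sum_p ind (g u (inr p)) * ind (g v (inr p)).
Proof.
rewrite /common card_set_predE big_sumType.
by congr (_ + _); apply: eq_bigr => w _; rewrite ind_and.
Qed.

(* A vertex x has K neighbours in Delta and k in the block phi (cls x);
   a point has N neighbours in each of the k classes whose block contains it. *)
Lemma gamma_regular d : K + k = d -> k * N = d -> forall u, #|nbhd g u|%:R = d.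
Proof.
move=> vertex_deg point_deg [x|p]; rewrite degree_split /=.
  by rewrite -vertex_deg -(degree x) -(block_size (cls x)) card_set_predE card_setE.
rewrite -point_deg [X in _ + X]big1 ?addr0 //.
rewrite (sum_over_classes class_size (fun i => ind (p \in phi i))) -mulr_suml.
by rewrite -card_set_predE replication.
Qed.

(* Two vertices: common neighbours in Delta, plus the common points of their
   blocks. *)
Let common_vertices x y : x != y ->
  (common g (inl x) (inl y))%:R = if cls x == cls y then l1 + k else l2 + l.
Proof.
move=> nxy; rewrite common_split /=.
have -> : \sum_z ind (e x z) * ind (e y z) = (common e x y)%:R.
  by rewrite card_set_predE; apply: eq_bigr => z _; rewrite ind_and.
have -> : \sum_p ind (p \in phi (cls x)) * ind (p \in phi (cls y)) =
    #|phi (cls x) :&: phi (cls y)|%:R.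
  by rewrite card_setE; apply: eq_bigr => p _; rewrite inE ind_and.
case: eqVneq => [same|diff].
  by rewrite common_in_class // same setIid block_size.
by rewrite common_across // intersection.
Qed.

(* A vertex x and a point p: the c neighbours of x in each of the k classes
   whose block contains p. *)
Let common_mixed x p : (common g (inl x) (inr p))%:R = k * c.
Proof.
rewrite common_split /= [X in _ + X]big1 ?addr0; last by move=> q _; rewrite mulr0.
transitivity (\sum_j ind (p \in phi j) * #|[set y | e x y && (cls y == j)]|%:R).
  under eq_bigr => z _ do
    rewrite -(sum_ind_eq (cls z) (fun j => ind (p \in phi j))) mulr_sumr.
  rewrite exchange_big; apply: eq_bigr => j _; rewrite card_set_predE mulr_sumr.
  by apply: eq_bigr => z _; rewrite ind_and; ring.
under eq_bigr do rewrite class_degree.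
by rewrite -mulr_suml -card_set_predE replication.
Qed.

(* Two points: the N vertices of each of the l classes whose block contains
   both. *)
Let common_points p q : p != q -> (common g (inr p) (inr q))%:R = N * l.
Proof.
move=> npq; rewrite common_split /= [X in _ + X]big1 ?addr0; last first.
  by move=> r _; rewrite mulr0.
rewrite (sum_over_classes class_size (fun i => ind (p \in phi i) * ind (q \in phi i))).
rewrite -mulr_suml mulrC -(pair_count npq) card_set_predE.
by congr (_ * _); apply: eq_bigr => i _; rewrite ind_and.
Qed.

Lemma gamma_common_constant t : l1 + k = t -> l2 + l = t -> k * c = t -> N * l = t ->
  forall u v, u != v -> (common g u v)%:R = t.
Proof.
move=> same_class other_class mixed points [x|p] [y|q] nuv.
- by rewrite common_vertices; [case: ifP | apply: contraNneq nuv => ->].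
- by rewrite common_mixed.
- by rewrite common_sym common_mixed.
- by rewrite common_points //; apply: contraNneq nuv => ->.
Qed.

End ExtendedGraph.

Theorem theorem4p3 (n : nat) (s : int) (m : nat)
    (T Pt : finType) (e : rel T) (cls : T -> 'I_m)
    (B : {set {set Pt}}) (phi : 'I_m -> {set Pt}) :
  s < 0 -> 0 < n%:Z + s ->
  let N : rat := n%:R in
  let S : rat := s%:~R in
  m%:R = (- S) * (N - 1) / (N + S) ->
  is_ddg e cls ((N * (- S) * (N - 1)) / (N + S)) ((- S) * (N - 1))
    ((- S) * (N + S - 1)) ((- S) * (N - 1) * (N + S) / N) N ->
  is_sym_design B m%:R (- S) ((- S) * (N + S) / N) ->
  injective phi -> phi @: setT = B ->
  is_srg (gamma_rel e cls phi) (m%:R * (N + 1)) ((- S) * N)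
    ((- S) * (N + S)) ((- S) * (N + S)).
Proof.
move=> s_neg ns_pos N S hm [e_graph [hV [hK [_ [_ [hN [hl1 hl2]]]]]]]
  [hPt _ block_size hpair] phi_inj phi_img.
have NS_gt0 : 0 < N + S by rewrite /N /S -[n%:R]/(n%:Z%:~R) -intrD ltr0z.
have NS_neq0 : N + S != 0 by rewrite gt_eqF.
have N_neq0 : N != 0 by rewrite gt_eqF // (lt_trans NS_gt0) // gtrDl /S ltrz0.
have blocks i : #|phi i|%:R = - S by apply: block_size; rewrite -phi_img imset_f.
have pairs p q : p != q ->
    #|[set i | (p \in phi i) && (q \in phi i)]|%:R = - S * (N + S) / N.
  move=> npq; rewrite -(hpair p q npq) -phi_img.
  by rewrite (card_indexed_blocks (fun b => (p \in b) && (q \in b)) phi_inj).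
have fisher : (m%:R - 1) * (- S * (N + S) / N) = - S * (- S - 1).
  by rewrite hm; field; apply/andP.
have nondegenerate : - S = 1 -> m = 1%N.
  move=> S1; have S_m1 : S = -1 by rewrite -S1 opprK.
  rewrite S_m1 in NS_neq0 hm; apply/eqP; rewrite -(eqr_nat rat) hm.
  by apply/eqP; field.
have replication := design_replication hPt blocks pairs fisher nondegenerate.
have intersection := design_intersection hPt blocks pairs fisher nondegenerate.
have class_degree x j : #|[set y | e x y && (cls y == j)]|%:R = N + S.
  by apply: (ddg_class_degree e_graph.1 hK hN hl1); rewrite hm; field.
have common_const : forall u v, u != v ->
    (common (gamma_rel e cls phi) u v)%:R = - S * (N + S).
  by apply: (gamma_common_constant hN hl1 hl2 class_degree blocks replication
    pairs intersection); field.
split=> [|||u v nuv _|u v nuv _]; try exact: common_const.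
- exact: gamma_is_graph.
- by rewrite card_sum natrD hV hPt hm; field.
- by apply: (gamma_regular hK hN blocks replication); field.
Qed.
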